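(* Let $q>0$, let $f$ be a $q$-concave function on $\mathbb R^n$ which is not $m$-isolated, for some $1\le m\le n$. If there exists an $m$-Dynkin vector for $f$, then $C(f)\ne\varnothing$.
   Context: A twice differentiable $f:\mathbb R^n\to\mathbb R$ is $q$-concave if $\frac{\partial f}{\partial x_i}(0)=0$ for all $i$, $\frac{\partial^2 f}{\partial x_i\partial x_j}\ge0$ everywhere for all $i,j$, and $\frac{\partial^2 f}{\partial x_i^2}\ge q$ everywhere for all $i$. With $e_m$ the $m$-th standard basis vector, $f$ is $m$-isolated if $\frac{\partial f}{\partial x_k}(e_m)=0$ for all $k\ne m$. A nonzero $d\in\mathbb Z^n$ is an $m$-Dynkin vector for $f$ if $0\le\frac{\partial f}{\partial x_m}(d)\le q$ and $\frac{\partial f}{\partial x_j}(d)=0$ for all $j\ne m$. $H_n=\{x:\sum x_i=0\}$; $C(f)$ is the set of $h\in H_n\setminus\{0\}$ with either all $\partial f/\partial x_i(h)\le0$ or all $\ge0$. *)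

From HB Require Import structures.
From mathcomp Require Import all_boot all_order all_algebra.
From mathcomp Require Import all_classical all_reals all_analysis.
Set Implicit Arguments. Unset Strict Implicit. Unset Printing Implicit Defensive.
Import Order.TTheory GRing.Theory Num.Theory.
Import numFieldNormedType.Exports.
Local Open Scope ring_scope.

Section Defs.
Variables (R : realType) (n : nat).

Definition ebasis (i : 'I_n) : 'rV[R]_n := delta_mx 0 i.

Definition pderiv (f : 'rV[R]_n -> R) (i : 'I_n) (x : 'rV[R]_n) : R :=
  'D_(ebasis i) f x.

Definition twice_differentiable (f : 'rV[R]_n -> R) : Prop :=
  (forall x, differentiable f x) /\
  (forall i x, differentiable (pderiv f i) x).

Definition q_concave (q : R) (f : 'rV[R]_n -> R) : Prop :=
  [/\ (forall i, pderiv f i 0 = 0),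
      (forall i j x, 0 <= pderiv (pderiv f j) i x) &
      (forall i x, q <= pderiv (pderiv f i) i x)].

Definition m_isolated (m : 'I_n) (f : 'rV[R]_n -> R) : Prop :=
  forall k : 'I_n, k != m -> pderiv f k (ebasis m) = 0.

Definition int_vec (d : 'rV[int]_n) : 'rV[R]_n := map_mx (fun z => z%:~R) d.

Definition dynkin_vector (m : 'I_n) (q : R) (f : 'rV[R]_n -> R)
  (d : 'rV[int]_n) : Prop :=
  [/\ d != 0,
      0 <= pderiv f m (int_vec d) <= q &
      (forall j : 'I_n, j != m -> pderiv f j (int_vec d) = 0)].

Definition in_H (x : 'rV[R]_n) : Prop := \sum_(i < n) x 0 i = 0.

Definition in_C (f : 'rV[R]_n -> R) (h : 'rV[R]_n) : Prop :=
  [/\ in_H h, h != 0 &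
      ((forall i, pderiv f i h <= 0) \/ (forall i, 0 <= pderiv f i h))].

End Defs.

(* Let D be the real image of an m-Dynkin vector, s the sum of its entries and
   h = D - s e_m its projection onto H_n along e_m.  Along the e_m direction
   every partial derivative of f is nondecreasing and the m-th one grows at
   rate at least q, so the signs of the partials at h are read off from those
   at D: they are all >= 0 when s <= 0 and all <= 0 when s >= 1 (here the bound
   df/dx_m (D) <= q is used).  Since s is an integer, one of these cases
   occurs.  It remains that h != 0: for s = 0 because h = D; for s < 0 because
   h = 0 would force df/dx_m (D) <= q s < 0; for s >= 1 because h = 0 would
   squeeze 0 = df/dx_k (0) <= df/dx_k (e_m) <= df/dx_k (s e_m) = 0 for k != m,
   making f m-isolated. *)
From HB Require Import structures.
From mathcomp Require Import all_boot all_order all_algebra.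
From mathcomp Require Import all_classical all_reals all_analysis.
Import Order.TTheory GRing.Theory Num.Theory.
Import numFieldNormedType.Exports.
Local Open Scope ring_scope.

Section DeriveAlongLine.
Variables (R : realType) (V W : normedModType R).
Variables (g : V -> W) (x v : V).

Let line_quotient_eq (t : R) :
  (fun h : R => h^-1 *: (((fun s : R => g (x + s *: v)) \o shift t) (h *: 1)
      - g (x + t *: v))) =
  (fun h : R => h^-1 *: ((g \o shift (x + t *: v)) (h *: v) - g (x + t *: v))).
Proof.
apply/funext => h /=; congr (_ *: (g _ - _)).
rewrite (_ : h%:A = h); last by rewrite /GRing.scale /= mulr1.
by rewrite scalerDl addrCA addrA.
Qed.

Lemma derivable_line (t : R) :
  derivable g (x + t *: v) v -> derivable (fun s : R => g (x + s *: v)) t 1.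
Proof. by rewrite /derivable line_quotient_eq. Qed.

Lemma derive_line (t : R) :
  'D_1 (fun s : R => g (x + s *: v)) t = 'D_v g (x + t *: v).
Proof. by rewrite /derive line_quotient_eq. Qed.

End DeriveAlongLine.

Lemma line_growth_ge {R : realType} {V : normedModType R} {g : V -> R}
    {x v : V} {c a b : R} :
  (forall y, derivable g y v) -> (forall y, c <= 'D_v g y) -> a <= b ->
  g (x + a *: v) + c * (b - a) <= g (x + b *: v).
Proof.
move=> dg c_le le_ab; pose psi s := g (x + s *: v).
have dpsi t : derivable psi t 1 by exact/derivable_line/dg.
have [t _ E] : exists2 t, t \in `[a, b] &
    psi b - psi a = 'D_v g (x + t *: v) * (b - a).
  apply: MVT_segment => // [t _|].
  - by rewrite -derive_line; exact: derivableP.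
  - apply: continuous_subspaceT => t.
    exact/differentiable_continuous/derivable1_diffP.
by rewrite -lerBrDl -/(psi a) -/(psi b) E ler_wpM2r ?subr_ge0.
Qed.

Section ProjectionOntoH.
Context {R : realType} {n : nat}.

Lemma sum_ebasis (m : 'I_n) : \sum_(i < n) ebasis R m 0 i = 1.
Proof.
rewrite (bigD1 m) //= big1 => [|i /negbTE neq_im]; rewrite !mxE ?eqxx ?neq_im //.
by rewrite addr0.
Qed.

Definition projH (m : 'I_n) (x : 'rV[R]_n) : 'rV[R]_n :=
  x - (\sum_(i < n) x 0 i) *: ebasis R m.

Lemma in_H_projH m x : in_H (projH m x).
Proof.
rewrite /in_H (eq_bigr (fun i => x 0 i - (\sum_(j < n) x 0 j) * ebasis R m 0 i)).
  by rewrite sumrB -mulr_sumr sum_ebasis mulr1 subrr.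
by move=> i _; rewrite !mxE.
Qed.

End ProjectionOntoH.

Section IntVec.
Context {R : realType} {n : nat}.

Lemma sum_int_vec (d : 'rV[int]_n) :
  \sum_(i < n) int_vec R d 0 i = (\sum_(i < n) d 0 i)%:~R.
Proof. by rewrite rmorph_sum; apply: eq_bigr => i _; rewrite mxE. Qed.

Lemma int_vec_eq0 (d : 'rV[int]_n) : (int_vec R d == 0) = (d == 0).
Proof.
apply/eqP/eqP => [/matrixP d0|->]; last by apply/matrixP => i j; rewrite !mxE.
by apply/matrixP => i j; have /eqP := d0 i j; rewrite !mxE intr_eq0 => /eqP.
Qed.

End IntVec.

Section QConcave.
Context {R : realType} {n : nat} {q : R} {f : 'rV[R]_n -> R} {m : 'I_n}.
Hypotheses (q_gt0 : 0 < q) (f_twice : twice_differentiable f)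
  (f_qconc : q_concave q f).
Local Notation e := (ebasis R m).

Lemma pderiv_le_along_ebasis j x a b :
  a <= b -> pderiv f j (x + a *: e) <= pderiv f j (x + b *: e).
Proof.
case: f_twice f_qconc => _ ddf [_ mixed_ge0 _] le_ab.
rewrite -[leLHS]addr0 -(mul0r (b - a)).
exact: line_growth_ge (fun y => diff_derivable (ddf j y)) (mixed_ge0 m j) le_ab.
Qed.

Lemma pderiv_growth_along_ebasis x a b : a <= b ->
  pderiv f m (x + a *: e) + q * (b - a) <= pderiv f m (x + b *: e).
Proof.
case: f_twice f_qconc => _ ddf [_ _ diag_ge].
exact: line_growth_ge (fun y => diff_derivable (ddf m y)) (diag_ge m).
Qed.

Context {D : 'rV[R]_n}.
Hypotheses (Dm_ge0 : 0 <= pderiv f m D) (Dm_leq : pderiv f m D <= q)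
  (Dj_eq0 : forall j, j != m -> pderiv f j D = 0).
Let s := \sum_(i < n) D 0 i.
Let h := projH m D.

Let h_add0Z : h + 0 *: e = h. Proof. by rewrite scale0r addr0. Qed.
Let h_addZ : h + s *: e = D. Proof. exact: subrK. Qed.

Lemma pderiv_projH_ge0 : s <= 0 -> forall i, 0 <= pderiv f i h.
Proof.
move=> s_le0 i; have [->|neq_im] := eqVneq i m.
  have := pderiv_growth_along_ebasis h s 0 s_le0; rewrite h_addZ h_add0Z.
  by apply: le_trans; rewrite addr_ge0 // sub0r mulr_ge0 ?oppr_ge0 // ltW.
by have := pderiv_le_along_ebasis i h s 0 s_le0; rewrite h_addZ h_add0Z Dj_eq0.
Qed.

Lemma pderiv_projH_le0 : 1 <= s -> forall i, pderiv f i h <= 0.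
Proof.
move=> s_ge1; have s_ge0 : 0 <= s := le_trans ler01 s_ge1.
move=> i; have [->|neq_im] := eqVneq i m.
  have := pderiv_growth_along_ebasis h 0 s s_ge0; rewrite h_addZ h_add0Z subr0.
  move=> /le_trans/(_ (le_trans Dm_leq (ler_peMr (ltW q_gt0) s_ge1))).
  by rewrite gerDr.
by have := pderiv_le_along_ebasis i h 0 s s_ge0; rewrite h_addZ h_add0Z Dj_eq0.
Qed.

Let D_ebasis : h = 0 -> D = s *: e.
Proof. by move=> h0; rewrite -h_addZ h0 add0r. Qed.

Lemma projH_neq0_sum_lt0 : s < 0 -> h != 0.
Proof.
move=> s_lt0; apply/eqP => /D_ebasis D_e; case: f_qconc => f'0 _ _.
have := pderiv_growth_along_ebasis 0 s 0 (ltW s_lt0).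
rewrite !add0r scale0r -D_e f'0 leNgt => /negP; apply.
by rewrite ltr_wpDl // mulr_gt0 ?oppr_gt0.
Qed.

Lemma projH_neq0_sum_ge1 : ~ m_isolated m f -> 1 <= s -> h != 0.
Proof.
move=> not_iso s_ge1; apply/eqP => /D_ebasis D_e; apply: not_iso => k neq_km.
case: f_qconc => f'0 _ _.
have := pderiv_le_along_ebasis k 0 0 1 ler01.
have := pderiv_le_along_ebasis k 0 1 s s_ge1.
rewrite !add0r scale0r scale1r -D_e Dj_eq0 // f'0 => le_0 ge_0.
by apply/eqP; rewrite eq_le le_0 ge_0.
Qed.

End QConcave.

Theorem lemma3 (R : realType) (n : nat) (q : R) (f : 'rV[R]_n -> R)
  (m : 'I_n) :
  0 < q ->
  twice_differentiable f ->
  q_concave q f ->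
  ~ m_isolated m f ->
  (exists d : 'rV[int]_n, dynkin_vector m q f d) ->
  exists h : 'rV[R]_n, in_C f h.
Proof.
move=> q_gt0 f_twice f_qconc not_iso [d [d_neq0 /andP[Dm_ge0 Dm_leq] Dj_eq0]].
have neq0_lt0 := projH_neq0_sum_lt0 q_gt0 f_twice f_qconc Dm_ge0.
have neq0_ge1 := projH_neq0_sum_ge1 f_twice f_qconc Dj_eq0 not_iso.
have all_le0 := pderiv_projH_le0 q_gt0 f_twice f_qconc Dm_leq Dj_eq0.
have all_ge0 := pderiv_projH_ge0 q_gt0 f_twice f_qconc Dm_ge0 Dj_eq0.
have s_int := sum_int_vec (R := R) d.
exists (projH m (int_vec R d)); split; first exact: in_H_projH.
- have [z_lt0|z_gt0|z_eq0] := ltrgtP (\sum_(i < n) d 0 i) 0.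
  + by apply: neq0_lt0; rewrite s_int ltrz0.
  + by apply: neq0_ge1; rewrite s_int ler1z -gtz0_ge1.
  + by rewrite /projH s_int z_eq0 scale0r subr0 int_vec_eq0.
- have [z_gt0|z_le0] := ltrP 0 (\sum_(i < n) d 0 i).
  + by left; apply: all_le0; rewrite s_int ler1z -gtz0_ge1.
  + by right; apply: all_ge0; rewrite s_int lerz0.
Qed.
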